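(* Let $0<T\le\infty$, and let $F,G\in C^2((0,T))\cap C^1([0,T))$ satisfy $F'(t)\ge0$ and $G(t)\ge 0$ for all $t$. Suppose that for all $t\in(0,T)$, $$F''(t)\ge A(t+1)^{-\alpha}G(t)^q,\qquad G''(t)\ge B(t+1)^{-\beta}F'(t)^p,$$ where $A,B>0$, $p,q>1$ and $\alpha,\beta\ge0$ are constants. Assume $G'(0)>0$. Assume also that there are constants $\kappa>0$, $a>0$ and $t_0\ge0$ such that $G(t)\ge\kappa t^a$ for all $t\in[t_0,T)$. If $$\max\{t_0,\ G(0)/G'(0),\ 1\}<T/2\qquad\text{and}\qquad \beta+\alpha p<p+2+a(pq-1),$$ then $$T\le C\,\kappa^{-\frac{pq-1}{p+2+a(pq-1)-(\beta+\alpha p)}},$$ where $C$ depends only on $A,B,p,q,\alpha,\beta,a$. *)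

From Stdlib Require Import Reals.
Open Scope R_scope.

(* Extended time horizon T in (0, +oo]: [Some T] is a finite T, [None] is +oo. *)
Definition extR := option R.

Definition lt_ext (t : R) (T : extR) : Prop :=
  match T with Some T' => t < T' | None => True end.

Definition lt_half_ext (x : R) (T : extR) : Prop :=
  match T with Some T' => x < T' / 2 | None => True end.

Definition le_ext (T : extR) (b : R) : Prop :=
  match T with Some T' => T' <= b | None => False end.

Definition pos_ext (T : extR) : Prop :=
  match T with Some T' => 0 < T' | None => True end.

Definition Ico0 (T : extR) (t : R) : Prop := 0 <= t /\ lt_ext t T.
Definition Ioo0 (T : extR) (t : R) : Prop := 0 < t /\ lt_ext t T.

(* Real power x^y for x >= 0, y > 0, with the convention 0^y = 0
   (Stdlib's Rpower only makes sense for x > 0). *)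
Definition rpow (x y : R) : R := if Rle_dec x 0 then 0 else Rpower x y.

Definition deriv_within (D : R -> Prop) (f : R -> R) (x l : R) : Prop :=
  limit1_in (fun y => (f y - f x) / (y - x)) (fun y => D y /\ y <> x) l x.

Definition cont_within (D : R -> Prop) (f : R -> R) (x : R) : Prop :=
  limit1_in f D (f x) x.

Definition C1_Ico_C2_Ioo (T : extR) (f f1 f2 : R -> R) : Prop :=
  (forall t, Ico0 T t -> deriv_within (Ico0 T) f t (f1 t)) /\
  (forall t, Ico0 T t -> cont_within (Ico0 T) f1 t) /\
  (forall t, Ioo0 T t -> derivable_pt_lim f1 t (f2 t)) /\
  (forall t, Ioo0 T t -> continuity_pt f2 t).

From Stdlib Require Import Reals Lra.
Open Scope R_scope.

(* Since G'' >= 0 and G'(0) > 0, G is nondecreasing.  If G >= M at time s, the two differential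
   inequalities make F' grow linearly on the first third of a window [s, s + 3d], then G' on the
   second third and finally G on the last one, so that G(s + 3d) >= M + K M^(pq) d^(p+2), where K
   only involves the weights at the right end of the window.  Choosing d so that the increment
   equals M, G doubles across the window; doubling M shrinks that d by the factor
   rho = 2^(-(pq-1)/(p+2)) < 1, so infinitely many doublings take a time bounded by a geometric
   series.  Starting from M = kappa t1^a at t1, this total time is less than t1 once t1 exceeds
   C kappa^(-(pq-1)/(p+2+a(pq-1)-(beta+alpha p))); G would then be unbounded on [t1, 2 t1], so
   such a t1 cannot satisfy 2 t1 < T. *)

Lemma Rpower_gt0 x y : 0 < Rpower x y.
Proof. apply exp_pos. Qed.

Lemma rpow_pos_eq x y : 0 < x -> rpow x y = Rpower x y.
Proof. intros Hx. unfold rpow. destruct (Rle_dec x 0); [lra | reflexivity]. Qed.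

Lemma rpow_ge0 x y : 0 <= rpow x y.
Proof. unfold rpow. destruct (Rle_dec x 0); [lra | left; apply Rpower_gt0]. Qed.

Lemma rpow_le_compat x y c : 0 <= c -> 0 < x <= y -> rpow x c <= rpow y c.
Proof. intros Hc Hxy. rewrite !rpow_pos_eq by lra. apply Rle_Rpower_l; lra. Qed.

Lemma Rpower_opp_le_compat x y c : 0 <= c -> 0 < x <= y -> Rpower y (- c) <= Rpower x (- c).
Proof.
  intros Hc [Hx Hxy]. unfold Rpower.
  assert (ln x <= ln y) by (destruct Hxy; [left; apply ln_increasing | subst]; lra).
  destruct (Req_dec (- c * ln y) (- c * ln x)) as [E|E]; [rewrite E; lra|].
  left; apply exp_increasing; nra.
Qed.

Lemma weighted_lower_bound A alpha X t w f :
  0 < A -> 0 <= alpha -> 0 < t + 1 <= X -> 0 <= w ->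
  f >= A * Rpower (t + 1) (- alpha) * w -> A * Rpower X (- alpha) * w <= f.
Proof.
  intros HA Hal Ht Hw Hf.
  assert (Rpower X (- alpha) <= Rpower (t + 1) (- alpha)) by (apply Rpower_opp_le_compat; lra).
  apply Rge_le in Hf. eapply Rle_trans; [|exact Hf].
  apply Rmult_le_compat_r; [lra|]. apply Rmult_le_compat_l; lra.
Qed.

Lemma weighted_ge0 B beta x w p f : 0 < B ->
  f >= B * Rpower x (- beta) * rpow w p -> 0 <= f.
Proof.
  intros HB Hf. pose proof (Rpower_gt0 x (- beta)). pose proof (rpow_ge0 w p).
  apply Rge_le in Hf. eapply Rle_trans; [|exact Hf].
  apply Rmult_le_pos; [apply Rmult_le_pos|]; lra.
Qed.

Lemma MVT_lower_bound f f' u v m : u <= v ->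
  (forall c, u <= c <= v -> derivable_pt_lim f c (f' c)) ->
  (forall c, u < c < v -> m <= f' c) -> m * (v - u) <= f v - f u.
Proof.
  intros [Huv|<-] Hd Hm; [|lra].
  destruct (MVT_cor2 f f' u v Huv Hd) as [c [-> Hc]].
  apply Rmult_le_compat_r; [lra | auto].
Qed.

Lemma nondecreasing_of_deriv_ge0 f f' u v :
  (forall c, u <= c <= v -> derivable_pt_lim f c (f' c)) ->
  (forall c, u <= c <= v -> 0 <= f' c) ->
  forall x y, u <= x -> x <= y -> y <= v -> f x <= f y.
Proof.
  intros Hd Hf x y Hx Hxy Hy.
  assert (H := MVT_lower_bound f f' x y 0 Hxy
    (fun c Hc => Hd c ltac:(lra)) (fun c Hc => Hf c ltac:(lra))). lra.
Qed.

Lemma lt_ext_le_compat t t' T : t <= t' -> lt_ext t' T -> lt_ext t T.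
Proof. destruct T; simpl; auto; lra. Qed.

Lemma Ioo0_convex T u v c : Ioo0 T u -> Ioo0 T v -> u <= c <= v -> Ioo0 T c.
Proof. intros [Hu _] [_ Hv] Hc. split; [lra | eapply lt_ext_le_compat; eauto; lra]. Qed.

Lemma Ioo0_nbhd T x : Ioo0 T x ->
  exists eta, 0 < eta /\ forall y, Rabs (y - x) < eta -> Ioo0 T y.
Proof.
  intros [Hx HxT]. destruct T as [T'|]; simpl in HxT.
  - exists (Rmin x (T' - x)). split; [apply Rmin_pos; lra|].
    intros y Hy. apply Rabs_def2 in Hy.
    pose proof (Rmin_l x (T' - x)). pose proof (Rmin_r x (T' - x)).
    split; simpl; lra.
  - exists x. split; [lra|]. intros y Hy. apply Rabs_def2 in Hy. split; simpl; [lra | auto].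
Qed.

Lemma deriv_within_interior T f x l :
  Ioo0 T x -> deriv_within (Ico0 T) f x l -> derivable_pt_lim f x l.
Proof.
  intros Hx Hd eps Heps. destruct (Hd eps Heps) as [alp [Halp Hf]].
  destruct (Ioo0_nbhd T x Hx) as [eta [Heta Hnbhd]].
  assert (Hmin : 0 < Rmin alp eta) by (apply Rmin_pos; lra).
  exists (mkposreal _ Hmin). intros h Hh0 Hh. simpl in Hh.
  pose proof (Rmin_l alp eta). pose proof (Rmin_r alp eta).
  assert (Hxh : Ioo0 T (x + h)) by (apply Hnbhd; replace (x + h - x) with h by ring; lra).
  specialize (Hf (x + h)). simpl in Hf. unfold Rdist in Hf.
  replace (x + h - x) with h in Hf by ring.
  apply Hf. destruct Hxh as [Hxh HxhT].
  split; [split; [split; [lra | exact HxhT] | lra] | lra].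
Qed.

Lemma nondecreasing_Ioo0 T f f' :
  (forall c, Ioo0 T c -> derivable_pt_lim f c (f' c)) ->
  (forall c, Ioo0 T c -> 0 <= f' c) ->
  forall x y, Ioo0 T x -> Ioo0 T y -> x <= y -> f x <= f y.
Proof.
  intros Hd Hf x y Hx Hy Hxy.
  apply (nondecreasing_of_deriv_ge0 f f' x y); try lra;
    intros c Hc; [apply Hd | apply Hf]; exact (Ioo0_convex T x y c Hx Hy Hc).
Qed.

Lemma ge_at_0_of_nondecreasing T f :
  cont_within (Ico0 T) f 0 ->
  (forall x y, Ioo0 T x -> Ioo0 T y -> x <= y -> f x <= f y) ->
  forall t, Ioo0 T t -> f 0 <= f t.
Proof.
  intros Hc Hmono t Ht.
  destruct (Rle_or_lt (f 0) (f t)) as [|Hlt]; [assumption | exfalso].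
  destruct (Hc (f 0 - f t) ltac:(lra)) as [alp [Halp Hf]].
  destruct Ht as [Ht HtT].
  set (u := Rmin (alp / 2) t).
  assert (Hu : 0 < u <= t /\ u <= alp / 2).
  { unfold u. split; [split; [apply Rmin_pos|apply Rmin_r] | apply Rmin_l]; lra. }
  assert (HuT : Ioo0 T u) by (split; [lra | apply (lt_ext_le_compat u t T); [lra | exact HtT]]).
  assert (Hfu : f u <= f t) by (apply Hmono; [exact HuT | split; assumption | lra]).
  specialize (Hf u). simpl in Hf. unfold Rdist in Hf.
  assert (Hdist : Rabs (f u - f 0) < f 0 - f t).
  { apply Hf. split; [destruct HuT; split; [lra | assumption]|].
    rewrite Rminus_0_r, Rabs_right; lra. }
  apply Rabs_def2 in Hdist. lra.
Qed.

Lemma Ico0_of_Ioo0 T c : Ioo0 T c -> Ico0 T c.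
Proof. intros [Hc HcT]. split; [lra | exact HcT]. Qed.

Lemma C1_Ico_C2_Ioo_derivable T f f1 f2 : C1_Ico_C2_Ioo T f f1 f2 ->
  (forall c, Ioo0 T c -> derivable_pt_lim f c (f1 c)) /\
  (forall c, Ioo0 T c -> derivable_pt_lim f1 c (f2 c)).
Proof.
  intros [Hd [_ [Hd1 _]]]. split; [|exact Hd1].
  intros c Hc. apply (deriv_within_interior T); [exact Hc | apply Hd, Ico0_of_Ioo0, Hc].
Qed.

Lemma C1_Ico_C2_Ioo_deriv_ge0 T f f1 f2 : C1_Ico_C2_Ioo T f f1 f2 -> 0 < f1 0 ->
  (forall c, Ioo0 T c -> 0 <= f2 c) -> forall c, Ioo0 T c -> 0 <= f1 c.
Proof.
  intros Hf Hf1_0 Hf2 c Hc. pose proof Hf as [_ [Hcont _]].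
  destruct (C1_Ico_C2_Ioo_derivable T f f1 f2 Hf) as [_ Hd1].
  assert (H0 : Ico0 T 0).
  { destruct Hc as [Hc HcT]. split; [lra | apply (lt_ext_le_compat 0 c); [lra | exact HcT]]. }
  pose proof (ge_at_0_of_nondecreasing T f1 (Hcont 0 H0) (nondecreasing_Ioo0 T f1 f2 Hd1 Hf2) c Hc).
  lra.
Qed.

Section Increment.

Variables (F1 F2 G G1 G2 : R -> R) (a1 b1 p q u v : R).
Hypotheses (Ha1 : 0 < a1) (Hb1 : 0 < b1) (Hp : 0 <= p) (Hq : 0 <= q).
Hypothesis F1_deriv : forall c, u <= c <= v -> derivable_pt_lim F1 c (F2 c).
Hypothesis G1_deriv : forall c, u <= c <= v -> derivable_pt_lim G1 c (G2 c).
Hypothesis G_deriv : forall c, u <= c <= v -> derivable_pt_lim G c (G1 c).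
Hypothesis F1_u_ge0 : 0 <= F1 u.
Hypothesis G1_ge0 : forall c, u <= c <= v -> 0 <= G1 c.
Hypothesis F2_lower : forall c, u <= c <= v -> a1 * rpow (G c) q <= F2 c.
Hypothesis G2_lower : forall c, u <= c <= v -> b1 * rpow (F1 c) p <= G2 c.

Variable M : R.
Hypotheses (HM : 0 < M) (HMu : M <= G u).

Lemma F1_lower t : u <= t <= v -> a1 * rpow M q * (t - u) <= F1 t.
Proof.
  intros Ht.
  enough (a1 * rpow M q * (t - u) <= F1 t - F1 u) by lra.
  apply (MVT_lower_bound F1 F2); [lra | intros c Hc; apply F1_deriv; lra |].
  intros c Hc. eapply Rle_trans; [|apply F2_lower; lra].
  apply Rmult_le_compat_l; [lra|]. apply rpow_le_compat; [lra|]. split; [lra|].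
  apply Rle_trans with (G u); [lra|].
  apply (nondecreasing_of_deriv_ge0 G G1 u v G_deriv G1_ge0); lra.
Qed.

Lemma G1_lower w t : u <= w -> w <= t <= v ->
  b1 * rpow (a1 * rpow M q * (w - u)) p * (t - w) <= G1 t.
Proof.
  intros Hw Ht.
  enough (b1 * rpow (a1 * rpow M q * (w - u)) p * (t - w) <= G1 t - G1 w)
    by (pose proof (G1_ge0 w ltac:(lra)); lra).
  apply (MVT_lower_bound G1 G2); [lra | intros c Hc; apply G1_deriv; lra |].
  intros c Hc. eapply Rle_trans; [|apply G2_lower; lra].
  apply Rmult_le_compat_l; [lra|].
  destruct (Req_dec w u) as [->|Hwu].
  { rewrite Rminus_diag, Rmult_0_r. unfold rpow at 1.
    destruct (Rle_dec 0 0); [apply rpow_ge0 | lra]. }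
  apply rpow_le_compat; [lra|]. split.
  - pose proof (Rpower_gt0 M q). rewrite rpow_pos_eq by lra.
    apply Rmult_lt_0_compat; [apply Rmult_lt_0_compat|]; lra.
  - eapply Rle_trans; [|apply F1_lower; lra].
    apply Rmult_le_compat_l; [|lra].
    pose proof (rpow_ge0 M q). apply Rmult_le_pos; lra.
Qed.

Lemma G_increment : u < v ->
  M + b1 * rpow (a1 * rpow M q * ((v - u) / 3)) p * ((v - u) / 3) * ((v - u) / 3) <= G v.
Proof.
  intros Huv. set (d := (v - u) / 3).
  assert (Hthird : b1 * rpow (a1 * rpow M q * d) p * d * d <= G v - G (u + 2 * d)).
  { replace (_ * d * d) with (b1 * rpow (a1 * rpow M q * d) p * d * (v - (u + 2 * d)))
      by (unfold d; field).
    apply (MVT_lower_bound G G1); [unfold d; lra | intros c Hc; apply G_deriv; unfold d in *; lra |].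
    intros c Hc. eapply Rle_trans; [|apply (G1_lower (u + d)); unfold d in *; lra].
    replace (u + d - u) with d by ring.
    pose proof (rpow_ge0 (a1 * rpow M q * d) p).
    apply Rmult_le_compat_l; [apply Rmult_le_pos|]; unfold d in *; lra. }
  assert (G u <= G (u + 2 * d))
    by (apply (nondecreasing_of_deriv_ge0 G G1 u v G_deriv G1_ge0); unfold d; lra).
  lra.
Qed.

End Increment.

Definition increment (K p q M d : R) : R := K * Rpower M (p * q) * Rpower d (p + 2).

Lemma increment_of_rpow a1 b1 p q M d : 0 < a1 -> 0 < M -> 0 < d ->
  b1 * rpow (a1 * rpow M q * d) p * d * d = increment (b1 * Rpower a1 p) p q M d.
Proof.
  intros Ha1 HM Hd. unfold increment.
  pose proof (Rpower_gt0 M q).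
  rewrite (rpow_pos_eq M) by lra.
  rewrite rpow_pos_eq by (apply Rmult_lt_0_compat; [apply Rmult_lt_0_compat|]; lra).
  rewrite <- !Rpower_mult_distr by (try apply Rmult_lt_0_compat; lra).
  rewrite Rpower_mult, Rpower_plus.
  replace (Rpower d 2) with (d * d)
    by (replace 2 with (INR 2) by (simpl; ring); rewrite Rpower_pow by lra; simpl; ring).
  rewrite (Rmult_comm q p). ring.
Qed.

Definition window_ratio (p q : R) : R := Rpower 2 (- ((p * q - 1) / (p + 2))).

Lemma window_ratio_bounds p q : 0 < p * q - 1 -> 0 < p + 2 ->
  0 < window_ratio p q < 1.
Proof.
  intros Hr Hp. split; [apply Rpower_gt0|].
  unfold window_ratio. apply Rlt_le_trans with (Rpower 2 0); [|rewrite Rpower_O; lra].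
  apply Rpower_lt; [lra|].
  assert (0 < (p * q - 1) / (p + 2)) by (apply Rdiv_lt_0_compat; lra). lra.
Qed.

Lemma increment_double K p q M d : 0 < M -> 0 < d -> 0 < p + 2 ->
  increment K p q (2 * M) (window_ratio p q * d) = 2 * increment K p q M d.
Proof.
  intros HM Hd Hp. unfold increment, window_ratio.
  rewrite <- !Rpower_mult_distr by (try apply Rpower_gt0; lra).
  rewrite Rpower_mult.
  replace (- ((p * q - 1) / (p + 2)) * (p + 2)) with (1 + - (p * q)) by (field; lra).
  rewrite Rpower_plus, Rpower_1 by lra.
  rewrite Rpower_Ropp. field. apply Rgt_not_eq, Rpower_gt0.
Qed.

Lemma doubling_absurd (g : R -> R) (phi : R -> R -> R) (t1 d0 rho M0 : R) :
  0 < M0 -> 0 < d0 -> 0 < rho < 1 ->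
  (forall M d, 0 < M -> 0 < d -> phi (2 * M) (rho * d) = 2 * phi M d) ->
  M0 <= phi M0 d0 ->
  (forall x y, t1 <= x -> x <= y -> y <= t1 + d0 / (1 - rho) -> g x <= g y) ->
  (forall s M d, 0 < M -> 0 < d -> t1 <= s -> s + d <= t1 + d0 / (1 - rho) ->
     M <= g s -> M + phi M d <= g (s + d)) ->
  M0 <= g t1 -> False.
Proof.
  intros HM0 Hd0 Hrho phi_double HM0phi g_mono g_step HM0g.
  set (ts := t1 + d0 / (1 - rho)).
  set (s := fun N => t1 + d0 * (1 - rho ^ N) / (1 - rho)).
  assert (rho_pow : forall N, 0 < rho ^ N) by (intros; apply pow_lt; lra).
  assert (s_S : forall N, s (S N) = s N + d0 * rho ^ N) by (intros; unfold s; simpl; field; lra).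
  assert (s_ge : forall N, t1 <= s N).
  { induction N as [|N IH]; [unfold s; simpl; lra|].
    rewrite s_S. pose proof (rho_pow N). nra. }
  assert (s_le : forall N, s N + d0 * rho ^ N <= ts).
  { intros N. rewrite <- s_S. unfold s, ts.
    assert (0 <= d0 * rho ^ S N / (1 - rho))
      by (apply Rlt_le, Rdiv_lt_0_compat; [apply Rmult_lt_0_compat; auto | lra]).
    replace (d0 / (1 - rho)) with (d0 * (1 - rho ^ S N) / (1 - rho) + d0 * rho ^ S N / (1 - rho))
      by (field; lra).
    lra. }
  assert (phi_N : forall N, phi (M0 * 2 ^ N) (d0 * rho ^ N) = 2 ^ N * phi M0 d0).
  { induction N as [|N IH]; [simpl; rewrite !Rmult_1_r, Rmult_1_l; reflexivity|].
    replace (M0 * 2 ^ S N) with (2 * (M0 * 2 ^ N)) by (simpl; ring).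
    replace (d0 * rho ^ S N) with (rho * (d0 * rho ^ N)) by (simpl; ring).
    rewrite phi_double, IH by (try apply Rmult_lt_0_compat; auto; apply pow_lt; lra).
    simpl; ring. }
  assert (g_s : forall N, M0 * 2 ^ N <= g (s N)).
  { induction N as [|N IH].
    { unfold s; simpl. rewrite Rminus_diag, Rmult_0_r, Rdiv_0_l, Rplus_0_r. lra. }
    rewrite s_S. eapply Rle_trans; [|apply (g_step (s N) (M0 * 2 ^ N)); auto].
    - rewrite phi_N. pose proof (pow_lt 2 N ltac:(lra)). simpl. nra.
    - apply Rmult_lt_0_compat; [lra | apply pow_lt; lra].
    - apply Rmult_lt_0_compat; auto. }
  destruct (Pow_x_infinity 2 ltac:(rewrite Rabs_right; lra) (g ts / M0 + 1)) as [N HN].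
  specialize (HN N (Nat.le_refl N)). rewrite Rabs_right in HN by (left; apply pow_lt; lra).
  assert (M0 * 2 ^ N <= g ts).
  { eapply Rle_trans; [apply g_s | apply g_mono; [apply s_ge | | unfold ts; lra]].
    pose proof (s_le N). pose proof (rho_pow N). nra. }
  assert (2 ^ N <= g ts / M0) by (apply (Rmult_le_reg_l M0); [lra|]; field_simplify; lra).
  lra.
Qed.

Definition blowup_exponent (p q a alpha beta : R) : R :=
  p + 2 + a * (p * q - 1) - (beta + alpha * p).

Definition log_threshold (A B p q alpha beta : R) : R :=
  (beta + alpha * p + p + 2) * ln 3 - ln B - p * ln A - (p + 2) * ln (1 - window_ratio p q).

Definition blowup_time_bound (A B p q a alpha beta kappa : R) : R :=
  exp (log_threshold A B p q alpha beta / blowup_exponent p q a alpha beta)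
  * Rpower kappa (- ((p * q - 1) / blowup_exponent p q a alpha beta)).

Lemma ln_threshold_of_lt W E r kappa t1 : 0 < E -> 0 < kappa ->
  exp (W / E) * Rpower kappa (- (r / E)) < t1 -> W - r * ln kappa < E * ln t1.
Proof.
  intros HE Hkappa Ht1.
  assert (Hlog : W / E - r / E * ln kappa < ln t1).
  { rewrite <- (ln_exp (W / E - _)). apply ln_increasing; [apply exp_pos|].
    unfold Rminus. rewrite exp_plus. unfold Rpower in Ht1.
    replace (- (r / E * ln kappa)) with (- (r / E) * ln kappa) by ring. exact Ht1. }
  apply (Rmult_lt_compat_l E) in Hlog; [|exact HE].
  replace (E * (W / E - r / E * ln kappa)) with (W - r * ln kappa) in Hlog by (field; lra).
  exact Hlog.
Qed.

Section Blowup.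

Variables (A B p q alpha beta : R) (T : extR) (F1 F2 G G1 G2 : R -> R).
Hypotheses (HA : 0 < A) (HB : 0 < B) (Hp : 1 < p) (Hq : 1 < q)
  (Halpha : 0 <= alpha) (Hbeta : 0 <= beta).
Hypothesis F1_deriv : forall c, Ioo0 T c -> derivable_pt_lim F1 c (F2 c).
Hypothesis G1_deriv : forall c, Ioo0 T c -> derivable_pt_lim G1 c (G2 c).
Hypothesis G_deriv : forall c, Ioo0 T c -> derivable_pt_lim G c (G1 c).
Hypothesis F1_ge0 : forall c, Ioo0 T c -> 0 <= F1 c.
Hypothesis G1_ge0 : forall c, Ioo0 T c -> 0 <= G1 c.
Hypothesis F2_lower : forall t, Ioo0 T t -> F2 t >= A * Rpower (t + 1) (- alpha) * rpow (G t) q.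
Hypothesis G2_lower : forall t, Ioo0 T t -> G2 t >= B * Rpower (t + 1) (- beta) * rpow (F1 t) p.

Definition increment_coef (X : R) : R :=
  B * Rpower X (- beta) * Rpower (A * Rpower X (- alpha)) p.

Lemma window_increment X s d M :
  0 < d -> 0 < M -> M <= G s ->
  (forall c, s <= c <= s + d -> Ioo0 T c /\ c + 1 <= X) ->
  M + increment (increment_coef X) p q M (d / 3) <= G (s + d).
Proof.
  intros Hd HM HMs Hwin.
  assert (HX : 0 < X) by (destruct (Hwin s ltac:(lra)) as [[] ?]; lra).
  assert (Ha1 : 0 < A * Rpower X (- alpha)) by (pose proof (Rpower_gt0 X (- alpha)); nra).
  unfold increment_coef. rewrite <- increment_of_rpow by lra.
  replace (d / 3) with ((s + d - s) / 3) by field.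
  apply (G_increment F1 F2 G G1 G2); try lra.
  - apply Rmult_lt_0_compat; [lra | apply Rpower_gt0].
  - intros c Hc; apply F1_deriv, Hwin; lra.
  - intros c Hc; apply G1_deriv, Hwin; lra.
  - intros c Hc; apply G_deriv, Hwin; lra.
  - apply F1_ge0, Hwin; lra.
  - intros c Hc; apply G1_ge0, Hwin; lra.
  - intros c Hc. destruct (Hwin c Hc) as [[Hc0 HcT] Hc1].
    apply (weighted_lower_bound A alpha X c); try lra; [apply rpow_ge0 | apply F2_lower; split; auto].
  - intros c Hc. destruct (Hwin c Hc) as [[Hc0 HcT] Hc1].
    apply (weighted_lower_bound B beta X c); try lra; [apply rpow_ge0 | apply G2_lower; split; auto].
Qed.

(* The first window has length 3 e^d with e^d chosen so that the first increment is exactly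
   kappa t1^a; the threshold on ln t1 is what makes all the windows fit before 2 t1. *)
Lemma no_long_window a kappa t1 :
  0 < kappa -> 1 <= t1 -> kappa * rpow t1 a <= G t1 ->
  0 < blowup_exponent p q a alpha beta ->
  blowup_time_bound A B p q a alpha beta kappa < t1 ->
  (forall t, t < 2 * t1 -> lt_ext t T) -> False.
Proof.
  intros Hkappa Ht1 HGt1 HE Ht1_large Hwin.
  apply ln_threshold_of_lt in Ht1_large as Hthreshold; [|assumption..].
  set (K := increment_coef (3 * t1)).
  set (M0 := kappa * rpow t1 a).
  set (rho := window_ratio p q).
  set (d := (- ln K - (p * q - 1) * ln M0) / (p + 2)).
  set (d0 := 3 * exp d).
  assert (HK : 0 < K).
  { unfold K, increment_coef. pose proof (Rpower_gt0 (3 * t1) (- beta)).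
    pose proof (Rpower_gt0 (A * Rpower (3 * t1) (- alpha)) p).
    apply Rmult_lt_0_compat; [apply Rmult_lt_0_compat|]; lra. }
  assert (HM0 : 0 < M0) by (unfold M0; rewrite rpow_pos_eq by lra; pose proof (Rpower_gt0 t1 a); nra).
  assert (Hrho : 0 < rho < 1) by (apply window_ratio_bounds; nra).
  assert (ln_K : ln K = ln B + p * ln A - (beta + alpha * p) * (ln 3 + ln t1)).
  { unfold K, increment_coef.
    rewrite !ln_mult by (try apply Rmult_lt_0_compat; try apply Rpower_gt0; lra).
    rewrite !ln_Rpower, (ln_mult A), ln_Rpower, ln_mult by (try apply Rpower_gt0; lra).
    ring. }
  assert (ln_M0 : ln M0 = ln kappa + a * ln t1).
  { unfold M0. rewrite rpow_pos_eq, ln_mult, ln_Rpower by (try apply Rpower_gt0; lra). reflexivity. }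
  assert (d0_fits : d0 / (1 - rho) < t1).
  { enough (ln 3 + d < ln (1 - rho) + ln t1) as Hlog.
    { apply exp_increasing in Hlog. rewrite !exp_plus, !exp_ln in Hlog by lra.
      apply (Rmult_lt_reg_r (1 - rho)); [lra|]. unfold d0. field_simplify; lra. }
    assert ((p + 2) * (ln (1 - rho) + ln t1 - (ln 3 + d)) =
            blowup_exponent p q a alpha beta * ln t1
            - (log_threshold A B p q alpha beta - (p * q - 1) * ln kappa)).
    { unfold d, blowup_exponent, log_threshold. fold rho. rewrite ln_K, ln_M0. field. lra. }
    nra. }
  assert (Hwindow : forall c, t1 <= c <= t1 + d0 / (1 - rho) -> Ioo0 T c /\ c + 1 <= 3 * t1).
  { intros c Hc. split; [split; [lra | apply Hwin; lra] | lra]. }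
  apply (doubling_absurd G (fun M len => increment K p q M (len / 3)) t1 d0 rho M0); auto.
  - unfold d0; pose proof (exp_pos d); lra.
  - intros M len HM Hlen. replace (rho * len / 3) with (rho * (len / 3)) by field.
    apply increment_double; lra.
  - apply Req_le. unfold increment, d0. replace (3 * exp d / 3) with (exp d) by field.
    unfold Rpower. rewrite ln_exp, <- (exp_ln K) at 1 by lra. rewrite <- !exp_plus.
    rewrite <- (exp_ln M0) at 1 by lra. f_equal. unfold d. field. lra.
  - intros x y Hx Hxy Hy.
    apply (nondecreasing_Ioo0 T G G1 G_deriv G1_ge0); [apply Hwindow; lra | apply Hwindow; lra | lra].
  - intros s M len HM Hlen Hs Hslen HMs.
    apply (window_increment (3 * t1)); auto.
    intros c Hc. apply Hwindow. lra.
Qed.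

End Blowup.

Theorem lemma2p1 :
  forall (A B p q alpha beta a : R),
    0 < A -> 0 < B -> 1 < p -> 1 < q -> 0 <= alpha -> 0 <= beta -> 0 < a ->
    beta + alpha * p < p + 2 + a * (p * q - 1) ->
  exists C : R,
  forall (T : extR) (F F1 F2 G G1 G2 : R -> R) (kappa t0 : R),
    pos_ext T ->
    C1_Ico_C2_Ioo T F F1 F2 ->
    C1_Ico_C2_Ioo T G G1 G2 ->
    (forall t, Ico0 T t -> 0 <= F1 t) ->
    (forall t, Ico0 T t -> 0 <= G t) ->
    (forall t, Ioo0 T t ->
       F2 t >= A * Rpower (t + 1) (- alpha) * rpow (G t) q) ->
    (forall t, Ioo0 T t ->
       G2 t >= B * Rpower (t + 1) (- beta) * rpow (F1 t) p) ->
    G1 0 > 0 ->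
    0 < kappa -> 0 <= t0 ->
    (forall t, t0 <= t -> lt_ext t T -> G t >= kappa * rpow t a) ->
    lt_half_ext (Rmax t0 (Rmax (G 0 / G1 0) 1)) T ->
    le_ext T
      (C * Rpower kappa
             (- ((p * q - 1) / (p + 2 + a * (p * q - 1) - (beta + alpha * p))))).
Proof.
  intros A B p q alpha beta a HA HB Hp Hq Halpha Hbeta _ Hexponent.
  assert (HE : 0 < blowup_exponent p q a alpha beta) by (unfold blowup_exponent; lra).
  exists (2 * exp (log_threshold A B p q alpha beta / blowup_exponent p q a alpha beta)).
  intros T F F1 F2 G G1 G2 kappa t0 _ HF HG F1_ge0 _ F2_lower G2_lower HG1_0 Hkappa _ G_growth Hhalf.
  set (X := blowup_time_bound A B p q a alpha beta kappa).
  replace (2 * _ * _) with (2 * X) by (unfold X, blowup_time_bound, blowup_exponent; ring).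
  assert (HX : 0 < X) by (apply Rmult_lt_0_compat; [apply exp_pos | apply Rpower_gt0]).
  destruct (C1_Ico_C2_Ioo_derivable T F F1 F2 HF) as [_ F1_deriv].
  destruct (C1_Ico_C2_Ioo_derivable T G G1 G2 HG) as [G_deriv G1_deriv].
  assert (G1_ge0 := C1_Ico_C2_Ioo_deriv_ge0 T G G1 G2 HG HG1_0
    (fun c Hc => weighted_ge0 B beta (c + 1) (F1 c) p _ HB (G2_lower c Hc))).
  assert (window_absurd : forall t1, Rmax t0 1 <= t1 -> X < t1 ->
            (forall t, t < 2 * t1 -> lt_ext t T) -> False).
  { intros t1 Ht1 HXt1 Hwin. pose proof (Rmax_l t0 1). pose proof (Rmax_r t0 1).
    apply (no_long_window A B p q alpha beta T F1 F2 G G1 G2 HA HB Hp Hq Halpha Hbeta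
      F1_deriv G1_deriv G_deriv (fun c Hc => F1_ge0 c (Ico0_of_Ioo0 T c Hc)) G1_ge0
      F2_lower G2_lower a kappa t1); auto; try lra.
    apply Rge_le, G_growth; [lra | apply Hwin; lra]. }
  (* Of the maximum in the hypothesis only t0 and 1 matter: G'(0) > 0 enters through G' >= 0. *)
  pose proof (Rmax_l t0 1). pose proof (Rmax_r t0 1).
  destruct T as [T'|]; simpl in *.
  - destruct (Rle_or_lt T' (2 * X)) as [|HT']; [assumption | exfalso].
    apply (window_absurd (T' / 2)); [| lra | intros; lra].
    pose proof (Rmax_l t0 (Rmax (G 0 / G1 0) 1)). pose proof (Rmax_r t0 (Rmax (G 0 / G1 0) 1)).
    pose proof (Rmax_r (G 0 / G1 0) 1). apply Rmax_lub; lra.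
  - apply (window_absurd (Rmax t0 1 + X + 1)); [lra | lra | auto].
Qed.
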